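(* For every $d\in2\mathbb N$, every $\tau\in S_d$ and every $n\in\mathbb N$ with $n>d(p-1)+d(4p-4)+\frac{d^2}{2}(4p-4)+\frac d2$, $$\binom{n-d(p-1)-d(4p-4)-\frac{d^2}{2}(4p-4)}{d/2}\le N(d,n,\tau).$$
   Context: Fix an integer $p\ge2$; $F_p=\langle x_0,x_1,\dots\mid x_nx_k=x_kx_{n+p-1}\ \forall k<n\rangle$ with identity $e$. For $d\in\mathbb N$ and $[d]=\{1,\dots,d\}$, a word of length $d$ is a tuple $w=(x_{i(1)}^{\epsilon(1)},\dots,x_{i(d)}^{\epsilon(d)})$ with $i:[d]\to\mathbb N_0$, $\epsilon:[d]\to\{1,-1\}$, written $w=(i,\epsilon)$; $\mathrm{eval}(w)=x_{i(1)}^{\epsilon(1)}\cdots x_{i(d)}^{\epsilon(d)}$; $\mathcal W_0(d,n)$ is the set of words of length $d$ with $\mathrm{eval}(w)=e$ and $i$ taking values in $\{0,\dots,n-1\}$. Rewriting relations: ($\rightsquigarrow$) a consecutive pair $(x_a^{-1},x_b)$ is replaced by $(x_b,x_{a+p-1}^{-1})$ if $a>b$, by $(x_{b+p-1},x_a^{-1})$ if $a<b$, by $(x_b,x_a^{-1})$ if $a=b$; ($\rightarrowtail$, on $\rightsquigarrow$-irreducible words) $(x_a,x_b)$ with $b-p+1>a$ is replaced by $(x_{b-p+1},x_a)$, and $(x_a^{-1},x_b^{-1})$ with $a-p+1>b$ by $(x_b^{-1},x_{a-p+1}^{-1})$. The normal form $\mathrm{NF}(w)$ is obtained by applying $\rightsquigarrow$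 until irreducible and then $\rightarrowtail$ until irreducible (well defined). Each step swaps two adjacent letters; $\tau(w)\in S_d$ is defined by letting $\tau(w)(l)$ be the position in $\mathrm{NF}(w)$ of the letter originating from the $l$-th letter of $w$. For $\tau\in S_d$: $\mathcal W_0(d,n,\tau)=\{w\in\mathcal W_0(d,n):\tau(w)=\tau\}$ and $N(d,n,\tau)=|\mathcal W_0(d,n,\tau)|$. *)

From mathcomp Require Import all_boot all_order all_fingroup.
From mathcomp Require Import boolp.
Set Implicit Arguments. Unset Strict Implicit. Unset Printing Implicit Defensive.

(* A letter x_i^{eps} is encoded as (i, b) with b = true for eps = 1 and
   b = false for eps = -1. *)
Definition letter := (nat * bool)%type.

Section Fp.
Variable p : nat.

(* The congruence on words generating equality in
   F_p = < x_0, x_1, ... | x_n x_k = x_k x_{n+p-1} (k < n) >. *)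
Inductive basic_rel : seq letter -> seq letter -> Prop :=
| br_inv1 a : basic_rel [:: (a, true); (a, false)] [::]
| br_inv2 a : basic_rel [:: (a, false); (a, true)] [::]
| br_rel n k : k < n ->
    basic_rel [:: (n, true); (k, true)] [:: (k, true); (n + p - 1, true)].

Inductive Fp_eq : seq letter -> seq letter -> Prop :=
| Fp_ctx u l r v : basic_rel l r -> Fp_eq (u ++ l ++ v) (u ++ r ++ v)
| Fp_refl w : Fp_eq w w
| Fp_sym w w' : Fp_eq w w' -> Fp_eq w' w
| Fp_trans w1 w2 w3 : Fp_eq w1 w2 -> Fp_eq w2 w3 -> Fp_eq w1 w3.

Definition eval_is_e (w : seq letter) : Prop := Fp_eq w [::].

(* Tagged letters: (letter, index of the position in the original word). *)
Definition tletter := (letter * nat)%type.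

Inductive rw1_pair : tletter -> tletter -> tletter -> tletter -> Prop :=
| rw1_gt a b i j : b < a ->
    rw1_pair ((a, false), i) ((b, true), j) ((b, true), j) ((a + p - 1, false), i)
| rw1_lt a b i j : a < b ->
    rw1_pair ((a, false), i) ((b, true), j) ((b + p - 1, true), j) ((a, false), i)
| rw1_eq a i j :
    rw1_pair ((a, false), i) ((a, true), j) ((a, true), j) ((a, false), i).

Inductive rw2_pair : tletter -> tletter -> tletter -> tletter -> Prop :=
| rw2_pos a b i j : a + p - 1 < b ->
    rw2_pair ((a, true), i) ((b, true), j) ((b - p + 1, true), j) ((a, true), i)
| rw2_neg a b i j : b + p - 1 < a ->
    rw2_pair ((a, false), i) ((b, false), j) ((b, false), j) ((a - p + 1, false), i).

Inductive step (R : tletter -> tletter -> tletter -> tletter -> Prop)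
  : seq tletter -> seq tletter -> Prop :=
| step_at u v x1 x2 y1 y2 : R x1 x2 y1 y2 ->
    step R (u ++ [:: x1; x2] ++ v) (u ++ [:: y1; y2] ++ v).

Definition irreducible R (s : seq tletter) : Prop := forall s', ~ step R s s'.

Inductive steps R : seq tletter -> seq tletter -> Prop :=
| steps_refl s : steps R s s
| steps_cons s1 s2 s3 : step R s1 s2 -> steps R s2 s3 -> steps R s1 s3.

Definition tag_word (w : seq letter) : seq tletter := zip w (iota 0 (size w)).

Definition NF_track (w : seq letter) (s_nf : seq tletter) : Prop :=
  exists s1, [/\ steps rw1_pair (tag_word w) s1, irreducible rw1_pair s1,
                 steps rw2_pair s1 s_nf & irreducible rw2_pair s_nf].

(* tau(w) = tau : the letter originating from position l of w ends in
   position tau(l) of NF(w) (positions are 0-based here). *)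
Definition tau_is (d : nat) (w : seq letter) (tau : 'S_d) : Prop :=
  exists s_nf, NF_track w s_nf /\
    forall l : 'I_d, index (val l) (map snd s_nf) = val (tau l).

Definition word_of (d n : nat) (w : d.-tuple ('I_n * bool)) : seq letter :=
  map (fun x => (val x.1, x.2)) (val w).

Definition Ncount (d n : nat) (tau : 'S_d) : nat :=
  #|[set w : d.-tuple ('I_n * bool) |
      `[< eval_is_e (word_of w) /\ tau_is (word_of w) tau >] ]|.

End Fp.

From mathcomp Require Import all_boot all_order all_fingroup.
From mathcomp Require Import boolp zify ring.
Set Implicit Arguments. Unset Strict Implicit. Unset Printing Implicit Defensive.

(* Let k = d/2.  The idea is to build, for every k-subset S of {0, ..., M-1}
   (M the binomial's upper argument), a word w_S in W_0(d, n, tau), injectively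
   in S.  The subset is encoded in indices c_0 > ... > c_(k-1), pairwise at
   least 2(p-1)d + p apart, and w_S is designed to have normal form
   x_{c_0} ... x_{c_(k-1)} x_{c_(k-1)}^-1 ... x_{c_0}^-1, which evaluates to e;
   the letter in position l of w_S is the one that must land in position tau(l).
   A rewrite swaps two adjacent letters and shifts the index of one of them by
   p - 1, so the index a letter carries at any stage depends only on the set of
   letters standing before it.  Giving every letter of w_S the index this rule
   predicts, the normal form computation becomes a sort: ~> moves the negative
   letters behind the positive ones, then >-> sorts each half by rank.  The gaps
   between the c_j make each of these swaps an admissible rewrite and leave the
   final word irreducible. *)


Section FpEq.
Variable p : nat.

Lemma Fp_eq_basic u l r v w w' : basic_rel p l r ->
  w = u ++ l ++ v -> w' = u ++ r ++ v -> Fp_eq p w w'.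
Proof. by move=> h -> ->; apply: Fp_ctx. Qed.

Lemma Fp_eq_cat u v w w' : Fp_eq p w w' -> Fp_eq p (u ++ w ++ v) (u ++ w' ++ v).
Proof.
elim=> [u0 l r v0 h| w0| w1 w2 _ ih| w1 w2 w3 _ ih1 _ ih2].
- by apply: (Fp_eq_basic (u := u ++ u0) (v := v0 ++ v) h); rewrite !catA.
- exact: Fp_refl.
- exact: Fp_sym.
- exact: Fp_trans ih1 ih2.
Qed.

Lemma Fp_eq_rw1_pair x1 x2 y1 y2 : rw1_pair p x1 x2 y1 y2 ->
  Fp_eq p [:: x1.1; x2.1] [:: y1.1; y2.1].
Proof.
case=> [a b i j hba| a b i j hab| a i j] /=.
- apply: Fp_trans (_ : Fp_eq p _ [:: (a,false); (b,true); (a+p-1,true); (a+p-1,false)]) _.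
    apply: Fp_sym; exact: (Fp_eq_basic (u := [:: (a,false); (b,true)]) (v := [::]) (br_inv1 _ _)).
  apply: Fp_trans (_ : Fp_eq p _ [:: (a,false); (a,true); (b,true); (a+p-1,false)]) _.
    apply: Fp_sym; exact: (Fp_eq_basic (u := [:: (a,false)]) (v := [:: (a+p-1,false)]) (br_rel _ hba)).
  exact: (Fp_eq_basic (u := [::]) (v := [:: (b,true); (a+p-1,false)]) (br_inv2 _ _)).
- apply: Fp_trans (_ : Fp_eq p _ [:: (a,false); (b,true); (a,true); (a,false)]) _.
    apply: Fp_sym; exact: (Fp_eq_basic (u := [:: (a,false); (b,true)]) (v := [::]) (br_inv1 _ _)).
  apply: Fp_trans (_ : Fp_eq p _ [:: (a,false); (a,true); (b+p-1,true); (a,false)]) _.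
    exact: (Fp_eq_basic (u := [:: (a,false)]) (v := [:: (a,false)]) (br_rel _ hab)).
  exact: (Fp_eq_basic (u := [::]) (v := [:: (b+p-1,true); (a,false)]) (br_inv2 _ _)).
- apply: Fp_trans (_ : Fp_eq p _ [::]) _.
    exact: (Fp_eq_basic (u := [::]) (v := [::]) (br_inv2 _ _)).
  apply: Fp_sym; exact: (Fp_eq_basic (u := [::]) (v := [::]) (br_inv1 _ _)).
Qed.

Lemma Fp_eq_rw2_pair x1 x2 y1 y2 : 0 < p -> rw2_pair p x1 x2 y1 y2 ->
  Fp_eq p [:: x1.1; x2.1] [:: y1.1; y2.1].
Proof.
move=> hp; case=> [a b i j hab| a b i j hba] /=.
- have hab' : a < b - p + 1 by lia.
  have -> : b = b - p + 1 + p - 1 by lia.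
  rewrite (_ : b - p + 1 + p - 1 - p + 1 = b - p + 1); last by lia.
  apply: Fp_sym; exact: (Fp_eq_basic (u := [::]) (v := [::]) (br_rel _ hab')).
- set a' := a - p + 1.
  have hba' : b < a' by rewrite /a'; lia.
  have ea : a' + p - 1 = a by rewrite /a'; lia.
  apply: Fp_sym.
  apply: Fp_trans (_ : Fp_eq p _ [:: (b,false); (a',false); (b,true); (b,false)]) _.
    apply: Fp_sym; exact: (Fp_eq_basic (u := [:: (b,false); (a',false)]) (v := [::]) (br_inv1 _ _)).
  apply: Fp_trans (_ : Fp_eq p _ [:: (b,false); (a',false); (b,true); (a,true); (a,false); (b,false)]) _.
    apply: Fp_sym.
    exact: (Fp_eq_basic (u := [:: (b,false); (a',false); (b,true)]) (v := [:: (b,false)]) (br_inv1 _ _)).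
  apply: Fp_trans (_ : Fp_eq p _ [:: (b,false); (a',false); (a',true); (b,true); (a,false); (b,false)]) _.
    apply: Fp_sym; apply: (Fp_eq_basic (u := [:: (b,false); (a',false)]) (v := [:: (a,false); (b,false)]) (br_rel _ hba')) => //.
    by rewrite ea.
  apply: Fp_trans (_ : Fp_eq p _ [:: (b,false); (b,true); (a,false); (b,false)]) _.
    exact: (Fp_eq_basic (u := [:: (b,false)]) (v := [:: (b,true); (a,false); (b,false)]) (br_inv2 _ _)).
  exact: (Fp_eq_basic (u := [::]) (v := [:: (a,false); (b,false)]) (br_inv2 _ _)).
Qed.

Lemma Fp_eq_steps R s s' :
  (forall x1 x2 y1 y2, R x1 x2 y1 y2 -> Fp_eq p [:: x1.1; x2.1] [:: y1.1; y2.1]) ->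
  steps R s s' -> Fp_eq p (map fst s) (map fst s').
Proof.
move=> HR; elim=> [s0|s1 s2 s3 [u v x1 x2 y1 y2 h] _ ih]; first exact: Fp_refl.
apply: Fp_trans ih; rewrite !map_cat.
exact: (Fp_eq_cat (map fst u) (map fst v) (HR _ _ _ _ h)).
Qed.

Lemma Fp_eq_mirror (f : nat -> nat) (s : seq nat) :
  Fp_eq p ([seq (f j, true) | j <- s] ++ [seq (f j, false) | j <- rev s]) [::].
Proof.
elim: s => [|j s ih] /=; first exact: Fp_refl.
rewrite rev_cons map_rcons.
apply: Fp_trans (_ : Fp_eq p _ [:: (f j, true); (f j, false)]) _.
  by have := Fp_eq_cat [:: (f j, true)] [:: (f j, false)] ih; rewrite /= -cats1 !catA.
exact: (Fp_eq_basic (u := [::]) (v := [::]) (br_inv1 _ _)).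
Qed.

End FpEq.

Section Swaps.
Variables (T : eqType) (ok : rel T).

Inductive swaps : seq T -> seq T -> Prop :=
| swaps_refl A : swaps A A
| swaps_step u x y v B :
    ok x y -> swaps (u ++ y :: x :: v) B -> swaps (u ++ x :: y :: v) B.

Lemma swaps_trans A B C : swaps A B -> swaps B C -> swaps A C.
Proof. by elim=> // u x y v B0 h _ ih /ih; apply: swaps_step. Qed.

Lemma swaps_cat a b A B : swaps A B -> swaps (a ++ A ++ b) (a ++ B ++ b).
Proof.
elim=> [A0|u x y v B0 h _ ih]; first exact: swaps_refl.
have e z1 z2 : a ++ (u ++ z1 :: z2 :: v) ++ b = (a ++ u) ++ z1 :: z2 :: (v ++ b).
  by rewrite -!catA.
by rewrite e; apply: swaps_step h _; rewrite -e.
Qed.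

Lemma swaps_cons t A B : swaps A B -> swaps (t :: A) (t :: B).
Proof. by move=> h; have := swaps_cat [:: t] [::] h; rewrite !cats0. Qed.

Lemma swaps_move_right t P N :
  (forall y, y \in P -> ok t y) -> swaps (t :: P ++ N) (P ++ t :: N).
Proof.
elim: P => [|y P ih] H /=; first exact: swaps_refl.
apply: (@swaps_step [::]); first by apply: H; rewrite inE eqxx.
by apply: swaps_cons; apply: ih => z hz; apply: H; rewrite inE hz orbT.
Qed.

Lemma swaps_move_left u t v :
  (forall y, y \in u -> ok y t) -> swaps (u ++ t :: v) (t :: u ++ v).
Proof.
elim: u => [|y u ih] H /=; first exact: swaps_refl.
apply: swaps_trans (swaps_cons y (ih _)) _.
  by move=> z hz; apply: H; rewrite inE hz orbT.
apply: (@swaps_step [::]); first by apply: H; rewrite inE eqxx.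
exact: swaps_refl.
Qed.

Lemma swaps_partition (a : pred T) A :
  (forall x y, x \in A -> y \in A -> ~~ a x -> a y -> ok x y) ->
  swaps A (filter a A ++ filter (predC a) A).
Proof.
elim: A => [|t A ih] H /=; first exact: swaps_refl.
have ihA : swaps A (filter a A ++ filter (predC a) A).
  by apply: ih => x y hx hy; apply: H; rewrite inE ?hx ?hy orbT.
case at_: (a t) => /=; first exact: swaps_cons.
apply: swaps_trans (swaps_cons t ihA) _.
apply: swaps_move_right => y; rewrite mem_filter => /andP[ay hy].
by apply: H; rewrite ?inE ?eqxx ?hy ?orbT ?at_.
Qed.

Lemma swaps_sort (r : rel T) S A : transitive r -> sorted r S -> perm_eq A S ->
  (forall y t, y \in S -> t \in S -> r t y -> ok y t) -> swaps A S.
Proof.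
move=> r_tr; elim: S A => [|t S ih] A hS hAS H.
  by move/perm_size: hAS => /size0nil ->; exact: swaps_refl.
have tA : t \in A by rewrite (perm_mem hAS) inE eqxx.
case/splitPr: tA hAS => u v hAS.
have huv : perm_eq (u ++ v) S.
  by rewrite -(perm_cons t); apply: perm_trans hAS; rewrite -cat1s perm_catCA.
have t_min := order_path_min r_tr hS.
apply: (@swaps_trans _ (t :: u ++ v)); last first.
  apply: swaps_cons; apply: ih (path_sorted hS) huv _.
  by move=> y z hy hz; apply: H; rewrite inE ?hy ?hz orbT.
apply: swaps_move_left => y hy.
have yS : y \in S by rewrite -(perm_mem huv) mem_cat hy.
by apply: H; rewrite ?inE ?yS ?eqxx ?orbT //; move/allP: t_min; apply.
Qed.

End Swaps.

Section Decoration.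
Variables (p d k : nat) (sg : nat -> bool) (rk c : nat -> nat).

Definition npos_above t (L : seq nat) := count (fun f => sg f && (rk t < rk f)) L.
Definition nneg_above t (L : seq nat) := count (fun f => ~~ sg f && (rk t < rk f)) L.

(* The index carried by letter [t] once the letters of [L] have been moved
   before it: starting from [c (rk t)], every rewrite moving a positive
   (negative) letter of higher rank across [t] raises (lowers) it by [p - 1]. *)
Definition shifted_index t L :=
  c (rk t) + (p - 1) * npos_above t L - (p - 1) * nneg_above t L.

(* [L] lists the letters placed before [A], most recent first. *)
Fixpoint decorate (L A : seq nat) : seq tletter :=
  if A is t :: A' then ((shifted_index t L, sg t), t) :: decorate (t :: L) A' else [::].

Lemma shifted_index_perm t L L' : perm_eq L L' -> shifted_index t L = shifted_index t L'.
Proof. by move/seq.permP=> h; rewrite /shifted_index /npos_above /nneg_above !h. Qed.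

Lemma shifted_index_rank t t' L : rk t = rk t' -> shifted_index t L = shifted_index t' L.
Proof. by move=> h; rewrite /shifted_index /npos_above /nneg_above h. Qed.

Lemma decorate_perm L L' A : perm_eq L L' -> decorate L A = decorate L' A.
Proof.
elim: A L L' => [|t A ih] L L' h //=.
by rewrite (shifted_index_perm t h) (ih (t :: L) (t :: L')) // perm_cons.
Qed.

Lemma decorate_cat L u v : decorate L (u ++ v) = decorate L u ++ decorate (rev u ++ L) v.
Proof. by elim: u L => [|t u ih] L //=; rewrite ih rev_cons cat_rcons. Qed.

Lemma map_snd_decorate L A : map snd (decorate L A) = A.
Proof. by elim: A L => [|t A ih] L //=; rewrite ih. Qed.

Lemma map_sign_decorate L A : map (fun e => e.1.2) (decorate L A) = map sg A.
Proof. by elim: A L => [|t A ih] L //=; rewrite ih. Qed.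

Lemma size_decorate L A : size (decorate L A) = size A.
Proof. by rewrite -(size_map snd) map_snd_decorate. Qed.

Lemma decorateE L A : decorate L A =
  [seq ((shifted_index (nth 0 A i) (rev (take i A) ++ L), sg (nth 0 A i)), nth 0 A i)
  | i <- iota 0 (size A)].
Proof.
elim: A L => [|t A ih] L //=.
rewrite ih /= -[1]/(1 + 0) iotaDl -map_comp; congr (_ :: _).
by apply: eq_map => i /=; rewrite rev_cons cat_rcons.
Qed.

Lemma step_decorate_swap R L u x y v :
  R ((shifted_index x (rev u ++ L), sg x), x) ((shifted_index y (x :: rev u ++ L), sg y), y)
    ((shifted_index y (rev u ++ L), sg y), y) ((shifted_index x (y :: rev u ++ L), sg x), x) ->
  step R (decorate L (u ++ x :: y :: v)) (decorate L (u ++ y :: x :: v)).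
Proof.
move=> h; rewrite !decorate_cat /=.
rewrite (@decorate_perm (y :: x :: rev u ++ L) (x :: y :: rev u ++ L)); last first.
  by apply/seq.permP => a /=; rewrite addnCA.
exact: (step_at (decorate L u) (decorate (x :: y :: rev u ++ L) v) h).
Qed.

Definition swap_lifts (R : tletter -> tletter -> tletter -> tletter -> Prop) (ok : rel nat) := forall L x y, size L < d -> ok x y ->
  R ((shifted_index x L, sg x), x) ((shifted_index y (x :: L), sg y), y)
    ((shifted_index y L, sg y), y) ((shifted_index x (y :: L), sg x), x).

Lemma steps_decorate R (ok : rel nat) A B : swap_lifts R ok -> size A <= d -> swaps ok A B ->
  steps R (decorate [::] A) (decorate [::] B).
Proof.
move=> hR hA h; elim: h hA => [A0 _|u x y v B0 hok _ ih hs]; first exact: steps_refl.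
apply: steps_cons (ih _); last by move: hs; rewrite !size_cat.
apply: step_decorate_swap; apply: hR => //.
by move: hs; rewrite cats0 size_rev size_cat /=; lia.
Qed.

Hypothesis p_gt0 : 0 < p.
Hypothesis rk_lt : forall t, t < d -> rk t < k.
Hypothesis c_ge : forall j, j < k -> (p - 1) * d <= c j.
Hypothesis c_gap : forall i j, i < j -> j < k -> c j + 2 * ((p - 1) * d) + p <= c i.

Lemma count_scaled_lt (a : pred nat) L : size L < d -> (p - 1) * count a L + (p - 1) <= (p - 1) * d.
Proof.
by move=> hL; rewrite addnC -mulnS leq_mul2l (leq_ltn_trans (count_size _ _) hL) orbT.
Qed.

Lemma shifted_index_bounds t L : size L < d -> t < d ->
  c (rk t) + (p - 1) <= shifted_index t L + (p - 1) * d /\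
  shifted_index t L + (p - 1) <= c (rk t) + (p - 1) * d.
Proof.
move=> hL ht; have := c_ge (rk_lt ht).
have := count_scaled_lt (fun f => sg f && (rk t < rk f)) hL.
have := count_scaled_lt (fun f => ~~ sg f && (rk t < rk f)) hL.
rewrite /shifted_index /npos_above /nneg_above.
move: ((p - 1) * d) ((p - 1) * count _ L) ((p - 1) * count _ L) => W P N; lia.
Qed.

Lemma shifted_index_cons t y L : size L < d -> t < d ->
  shifted_index t (y :: L) =
  if rk t < rk y then
    (if sg y then shifted_index t L + (p - 1) else shifted_index t L - (p - 1))
  else shifted_index t L.
Proof.
move=> hL ht; have := c_ge (rk_lt ht).
have := count_scaled_lt (fun f => sg f && (rk t < rk f)) hL.
have := count_scaled_lt (fun f => ~~ sg f && (rk t < rk f)) hL.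
rewrite /shifted_index /npos_above /nneg_above /=.
case: (rk t < rk y); case: (sg y); rewrite /= ?andbF ?add0n ?add1n ?mulnS //;
  move: ((p - 1) * d) ((p - 1) * count _ L) ((p - 1) * count _ L) => W P N; lia.
Qed.

Definition rw1_swappable x y := [&& x < d, y < d, ~~ sg x & sg y].

Lemma swap_lifts_rw1 : swap_lifts (rw1_pair p) rw1_swappable.
Proof.
move=> L x y hL /and4P[hx hy /negbTE sx sy].
rewrite !shifted_index_cons // sx sy.
have [] := shifted_index_bounds hL hx; have [] := shifted_index_bounds hL hy.
case: (ltngtP (rk x) (rk y)) => hr.
- have := c_gap hr (rk_lt hy); move: ((p - 1) * d) => W *.
  by rewrite addnBA //; apply: rw1_gt; lia.
- have := c_gap hr (rk_lt hx); move: ((p - 1) * d) => W *.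
  have e : shifted_index y L - (p - 1) + p - 1 = shifted_index y L by lia.
  by rewrite -{2}e; apply: rw1_lt; lia.
- by rewrite (shifted_index_rank L hr) => *; apply: rw1_eq.
Qed.

Definition rw2_swappable x y := [&& x < d, y < d &
  (sg x && sg y && (rk y < rk x)) || (~~ sg x && ~~ sg y && (rk x < rk y))].

Lemma swap_lifts_rw2 : swap_lifts (rw2_pair p) rw2_swappable.
Proof.
move=> L x y hL /and3P[hx hy hxy].
rewrite !shifted_index_cons //.
have [] := shifted_index_bounds hL hx; have [] := shifted_index_bounds hL hy.
case/orP: hxy => /andP[/andP[sx sy] hr].
- have := c_gap hr (rk_lt hx); move: ((p - 1) * d) => W *.
  rewrite sx sy hr ltnNge ltnW //=.
  have e : shifted_index y L + (p - 1) - p + 1 = shifted_index y L by lia.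
  by rewrite -{2}e; apply: rw2_pos; lia.
- have := c_gap hr (rk_lt hy); move: ((p - 1) * d) => W *.
  rewrite (negbTE sx) (negbTE sy) hr ltnNge ltnW //=.
  have -> : shifted_index x L - (p - 1) = shifted_index x L - p + 1 by lia.
  by apply: rw2_neg; lia.
Qed.

End Decoration.

Lemma irreducible_sorted R (r : rel tletter) s : sorted r s ->
  (forall x1 x2 y1 y2, R x1 x2 y1 y2 -> ~~ r x1 x2) -> irreducible R s.
Proof.
move=> hs H s' hst; case: hst hs => u v x1 x2 y1 y2 /H /negP nr.
by rewrite sorted_cat_cons /= => /and3P[_ /nr].
Qed.

Definition rw1_free (e1 e2 : tletter) := e2.1.2 ==> e1.1.2.

Lemma irreducible_rw1 p s : sorted rw1_free s -> irreducible (rw1_pair p) s.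
Proof. by move=> h; apply: (irreducible_sorted h) => x1 x2 y1 y2 []. Qed.

Definition rw2_free p (e1 e2 : tletter) :=
  (e1.1.2 && e2.1.2 ==> (e2.1.1 <= e1.1.1 + p - 1)) &&
  (~~ e1.1.2 && ~~ e2.1.2 ==> (e1.1.1 <= e2.1.1 + p - 1)).

Lemma irreducible_rw2 p s : sorted (rw2_free p) s -> irreducible (rw2_pair p) s.
Proof.
by move=> h; apply: (irreducible_sorted h) => x1 x2 y1 y2 [] a b i j hab; rewrite /rw2_free /=; lia.
Qed.

Lemma sorted_cat_rel (T : eqType) (r : rel T) s1 s2 : sorted r s1 -> sorted r s2 ->
  (forall x y, x \in s1 -> y \in s2 -> r x y) -> sorted r (s1 ++ s2).
Proof.
case: s1 => [|x s1] //= h1 h2 H.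
rewrite cat_path h1 /=; case: s2 h2 H => [|y s2] //= h2 H.
by rewrite h2 andbT; apply: H; rewrite ?mem_last ?inE ?eqxx.
Qed.

Lemma sorted_iota_succ (r : rel nat) m n :
  (forall i, m <= i -> i.+1 < m + n -> r i i.+1) -> sorted r (iota m n).
Proof.
elim: n m => [|n ih] m H //=.
case: n ih H => [|n] ih H //=.
rewrite H ?leqnn //; last by lia.
by have := ih m.+1; rewrite /=; apply => i hi hin; apply: H; lia.
Qed.

Lemma pairwise_all (T : Type) (a : pred T) (r : rel T) s :
  all a s -> (forall x y, a x -> a y -> r x y) -> pairwise r s.
Proof.
elim: s => [|x s ih] //= /andP[ax hs] H.
by rewrite ih // andbT; apply: sub_all hs => y; exact: H.
Qed.

Lemma sorted_partition_signs (sg : nat -> bool) A :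
  sorted (fun a b : bool => b ==> a) (map sg (filter sg A ++ filter (predC sg) A)).
Proof.
rewrite sorted_pairwise; last by move=> [] [] [].
rewrite map_cat pairwise_cat; apply/and3P; split.
- apply/allrelP => x y /mapP[u hu ->] /mapP[v hv ->].
  by move: hu hv; rewrite !mem_filter /= => /andP[-> _] /andP[/negbTE -> _].
- apply: (pairwise_all (a := id)); last by move=> [] [].
  by apply/allP => x /mapP[u]; rewrite mem_filter => /andP[h _] ->.
- apply: (pairwise_all (a := negb)); last by move=> [] [].
  by apply/allP => x /mapP[u]; rewrite mem_filter => /andP[h _] ->.
Qed.

Lemma count_iota_range a b n :
  count (fun m => (a <= m) && (m < b)) (iota 0 n) = minn b n - a.
Proof.
elim: n => [|n ih]; first by rewrite /= minn0.
by rewrite -addn1 iotaD count_cat ih /=; lia.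
Qed.

Section NormalFormShape.
Variables (k : nat) (tau : 'S_(k + k)).
Local Notation d := (k + k).

Definition nf_pos t := if (insub t : option 'I_d) is Some i then val (tau i) else t.
Definition letter_at t := if (insub t : option 'I_d) is Some i then val ((tau^-1)%g i) else t.

(* The letter in position [t] of the word must end in position [nf_pos t] of
   x_{c_0} ... x_{c_(k-1)} x_{c_(k-1)}^-1 ... x_{c_0}^-1, i.e. as x_{c_j}^{+-1}
   with sign [nf_sign t] and [j = nf_rank t]. *)
Definition nf_sign t := nf_pos t < k.
Definition nf_rank t := if nf_pos t < k then nf_pos t else d.-1 - nf_pos t.

Lemma nf_pos_ord (i : 'I_d) : nf_pos i = tau i.
Proof. by rewrite /nf_pos valK. Qed.

Lemma letter_at_ord (i : 'I_d) : letter_at i = (tau^-1)%g i.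
Proof. by rewrite /letter_at valK. Qed.

Lemma nf_pos_lt t : t < d -> nf_pos t < d.
Proof. by move=> h; rewrite -[t]/(nat_of_ord (Ordinal h)) nf_pos_ord. Qed.

Lemma letter_at_lt t : t < d -> letter_at t < d.
Proof. by move=> h; rewrite -[t]/(nat_of_ord (Ordinal h)) letter_at_ord. Qed.

Lemma nf_posK t : t < d -> letter_at (nf_pos t) = t.
Proof.
by move=> h; rewrite -[t]/(nat_of_ord (Ordinal h)) nf_pos_ord letter_at_ord permK.
Qed.

Lemma letter_atK t : t < d -> nf_pos (letter_at t) = t.
Proof.
by move=> h; rewrite -[t]/(nat_of_ord (Ordinal h)) letter_at_ord nf_pos_ord permKV.
Qed.

Lemma letter_at_out t : d <= t -> letter_at t = t.
Proof. by move=> h; rewrite /letter_at insubF //; apply/negbTE; rewrite -leqNgt. Qed.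

Lemma letter_at_inj : injective letter_at.
Proof.
move=> x y.
case: (ltnP x d) => hx; case: (ltnP y d) => hy.
- by move=> e; rewrite -(letter_atK hx) -(letter_atK hy) e.
- by rewrite (letter_at_out hy) => e; move: (letter_at_lt hx); rewrite e; lia.
- by rewrite (letter_at_out hx) => e; move: (letter_at_lt hy); rewrite -e; lia.
- by rewrite (letter_at_out hx) (letter_at_out hy).
Qed.

Lemma nf_rank_lt t : t < d -> nf_rank t < k.
Proof. by move=> h; have := nf_pos_lt h; rewrite /nf_rank; case: ifP => //; lia. Qed.

Lemma nf_sign_letter_at i : i < d -> nf_sign (letter_at i) = (i < k).
Proof. by move=> h; rewrite /nf_sign letter_atK. Qed.

Lemma nf_rank_letter_at i : i < d -> nf_rank (letter_at i) = if i < k then i else d.-1 - i.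
Proof. by move=> h; rewrite /nf_rank letter_atK. Qed.

Definition nf_arrangement := map letter_at (iota 0 d).
Definition nf_pos_letters := map letter_at (iota 0 k).
Definition nf_neg_letters := map letter_at (iota k k).

Lemma nf_arrangement_cat : nf_arrangement = nf_pos_letters ++ nf_neg_letters.
Proof. by rewrite /nf_arrangement iotaD map_cat. Qed.

Lemma mem_nf_pos_letters t : (t \in nf_pos_letters) = (t < d) && nf_sign t.
Proof.
apply/mapP/andP => [[i]|[ht hs]].
  rewrite mem_iota => /andP[_ hi] ->; split; first by apply: letter_at_lt; lia.
  by rewrite nf_sign_letter_at //; lia.
by exists (nf_pos t); rewrite ?nf_posK // mem_iota.
Qed.

Lemma mem_nf_neg_letters t : (t \in nf_neg_letters) = (t < d) && ~~ nf_sign t.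
Proof.
apply/mapP/andP => [[i]|[ht hs]].
  rewrite mem_iota => /andP[hi1 hi] ->; split; first by apply: letter_at_lt; lia.
  by rewrite nf_sign_letter_at //; lia.
exists (nf_pos t); last by rewrite nf_posK.
by have := nf_pos_lt ht; move: hs; rewrite /nf_sign mem_iota; lia.
Qed.

Lemma perm_nf_pos_letters : perm_eq (filter nf_sign (iota 0 d)) nf_pos_letters.
Proof.
apply: uniq_perm; first by rewrite filter_uniq // iota_uniq.
  by rewrite (map_inj_uniq letter_at_inj) iota_uniq.
by move=> t; rewrite mem_filter mem_iota mem_nf_pos_letters; lia.
Qed.

Lemma perm_nf_neg_letters : perm_eq (filter (predC nf_sign) (iota 0 d)) nf_neg_letters.
Proof.
apply: uniq_perm; first by rewrite filter_uniq // iota_uniq.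
  by rewrite (map_inj_uniq letter_at_inj) iota_uniq.
by move=> t; rewrite mem_filter mem_iota mem_nf_neg_letters /=; lia.
Qed.

Lemma sorted_nf_pos_letters : sorted (fun x y => nf_rank x < nf_rank y) nf_pos_letters.
Proof.
rewrite /nf_pos_letters sorted_map; apply: sorted_iota_succ => i _ hi /=.
by rewrite !nf_rank_letter_at ?ifT //; lia.
Qed.

Lemma sorted_nf_neg_letters : sorted (fun x y => nf_rank y < nf_rank x) nf_neg_letters.
Proof.
rewrite /nf_neg_letters sorted_map; apply: sorted_iota_succ => i h1 hi /=.
by rewrite !nf_rank_letter_at ?ifF //; lia.
Qed.

Lemma index_nf_arrangement (l : 'I_d) : index (val l) nf_arrangement = tau l.
Proof.
have -> : val l = letter_at (tau l) by rewrite letter_at_ord permK.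
rewrite /nf_arrangement (index_map letter_at_inj).
have h : tau l < size (iota 0 d) by rewrite size_iota.
by have := index_uniq 0 h (iota_uniq 0 d); rewrite nth_iota // -(size_iota 0 d).
Qed.

End NormalFormShape.

Section NormalFormWord.
Variables (k : nat) (tau : 'S_(k + k)) (p : nat) (c : nat -> nat).
Local Notation d := (k + k).
Local Notation sg := (nf_sign tau).
Local Notation rk := (nf_rank tau).
Local Notation D := (decorate p sg rk c).
Hypothesis p_gt0 : 0 < p.
Hypothesis c_ge : forall j, j < k -> (p - 1) * d <= c j.
Hypothesis c_gap : forall i j, i < j -> j < k -> c j + 2 * ((p - 1) * d) + p <= c i.

Definition sign_sorted := filter sg (iota 0 d) ++ filter (predC sg) (iota 0 d).

(* Above the letter at normal-form position [i], the positive and the negative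
   letters of higher rank occupy mirror-image positions. *)
Lemma nf_prefix_balanced i : i < d ->
  npos_above sg rk (letter_at tau i) (map (letter_at tau) (iota 0 i)) =
  nneg_above sg rk (letter_at tau i) (map (letter_at tau) (iota 0 i)).
Proof.
move=> hi; rewrite /npos_above /nneg_above !count_map.
have e (a b : pred nat) : (forall m, m < i -> a m = b m) ->
    count a (iota 0 i) = count b (iota 0 i).
  by move=> h; apply: eq_in_count => m; rewrite mem_iota => /andP[_ hm]; apply: h.
rewrite (nf_rank_letter_at tau hi).
case: (ltnP i k) => hik.
- rewrite (e _ (fun m => (i.+1 <= m) && (m < k))); last first.
    by move=> m hm /=; rewrite nf_sign_letter_at ?nf_rank_letter_at; try lia; case: ifP; lia.
  rewrite (e (fun f => ~~ sg (letter_at tau f) && _) (fun m => (k <= m) && (m < d.-1 - i)));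
    last by move=> m hm /=; rewrite nf_sign_letter_at ?nf_rank_letter_at; try lia; case: ifP; lia.
  by rewrite !count_iota_range; lia.
- rewrite (e _ (fun m => ((d.-1 - i).+1 <= m) && (m < k))); last first.
    by move=> m hm /=; rewrite nf_sign_letter_at ?nf_rank_letter_at; try lia; case: ifP; lia.
  rewrite (e (fun f => ~~ sg (letter_at tau f) && _) (fun m => (k <= m) && (m < i)));
    last by move=> m hm /=; rewrite nf_sign_letter_at ?nf_rank_letter_at; try lia; case: ifP; lia.
  by rewrite !count_iota_range; lia.
Qed.

Lemma nf_letters : map fst (D [::] (nf_arrangement tau)) =
  [seq (c j, true) | j <- iota 0 k] ++ [seq (c j, false) | j <- rev (iota 0 k)].
Proof.
rewrite decorateE -map_comp /nf_arrangement size_map size_iota.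
apply: (@etrans _ _ [seq (c (rk (letter_at tau i)), sg (letter_at tau i)) | i <- iota 0 d]).
  apply/eq_in_map => i; rewrite mem_iota => /andP[_ hi] /=.
  rewrite (nth_map 0) ?size_iota // nth_iota // -map_take take_iota.
  rewrite (shifted_index_perm _ _ _ _ _ (_ : perm_eq _ (map (letter_at tau) (iota 0 i)))).
    by rewrite /shifted_index nf_prefix_balanced // addnK.
  by rewrite cats0 perm_rev minnC (minn_idPr _) //; lia.
rewrite iotaD map_cat; congr (_ ++ _).
  apply/eq_in_map => i; rewrite mem_iota => /andP[_ hi] /=.
  by rewrite nf_sign_letter_at ?nf_rank_letter_at ?hi //; lia.
have -> : rev (iota 0 k) = map (fun i => d.-1 - i) (iota k k).
  apply: (@eq_from_nth _ 0); first by rewrite size_rev size_map !size_iota.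
  move=> i; rewrite size_rev size_iota => hi.
  by rewrite nth_rev ?size_iota // (nth_map 0) ?size_iota // !nth_iota //; lia.
rewrite -map_comp; apply/eq_in_map => i; rewrite mem_iota => /andP[h1 hi] /=.
have ik : (i < k) = false by apply/negbTE; lia.
by rewrite nf_sign_letter_at ?nf_rank_letter_at ?ik //; lia.
Qed.

Lemma steps_rw1_sign_sorted : steps (rw1_pair p) (D [::] (iota 0 d)) (D [::] sign_sorted).
Proof.
apply: steps_decorate (swap_lifts_rw1 p_gt0 (@nf_rank_lt k tau) c_ge c_gap) _ _.
  by rewrite size_iota.
apply: swaps_partition => x y hx hy sx sy; rewrite /rw1_swappable sx sy.
by move: hx hy; rewrite !mem_iota => /andP[_ ->] /andP[_ ->].
Qed.

Lemma steps_rw2_nf_arrangement :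
  steps (rw2_pair p) (D [::] sign_sorted) (D [::] (nf_arrangement tau)).
Proof.
apply: steps_decorate (swap_lifts_rw2 p_gt0 (@nf_rank_lt k tau) c_ge c_gap) _ _.
  by rewrite size_cat !size_filter count_predC size_iota.
rewrite nf_arrangement_cat.
have hP : swaps (rw2_swappable d sg rk) (filter sg (iota 0 d)) (nf_pos_letters tau).
  apply: (swaps_sort (r := fun x y => rk x < rk y)).
  - by move=> y x z; apply: ltn_trans.
  - exact: sorted_nf_pos_letters.
  - exact: perm_nf_pos_letters.
  move=> y t; rewrite !mem_nf_pos_letters => /andP[hy sy] /andP[ht st] hr.
  by rewrite /rw2_swappable hy ht sy st hr.
have hN : swaps (rw2_swappable d sg rk) (filter (predC sg) (iota 0 d)) (nf_neg_letters tau).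
  apply: (swaps_sort (r := fun x y => rk y < rk x)).
  - by move=> y x z h1 h2; apply: ltn_trans h2 h1.
  - exact: sorted_nf_neg_letters.
  - exact: perm_nf_neg_letters.
  move=> y t; rewrite !mem_nf_neg_letters => /andP[hy /negbTE sy] /andP[ht /negbTE st] hr.
  by rewrite /rw2_swappable hy ht sy st hr.
apply: swaps_trans (swaps_cat [::] (filter (predC sg) (iota 0 d)) hP) _.
by have := swaps_cat (nf_pos_letters tau) [::] hN; rewrite !cats0.
Qed.

Lemma irreducible_rw1_sign_sorted : irreducible (rw1_pair p) (D [::] sign_sorted).
Proof.
apply: irreducible_rw1.
by have := sorted_partition_signs sg (iota 0 d); rewrite -(map_sign_decorate p sg rk c [::]) sorted_map.
Qed.

Lemma irreducible_rw2_nf_arrangement : irreducible (rw2_pair p) (D [::] (nf_arrangement tau)).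
Proof.
apply: irreducible_rw2.
suff : sorted (fun a b : letter => (a.2 && b.2 ==> (b.1 <= a.1 + p - 1)) &&
    (~~ a.2 && ~~ b.2 ==> (a.1 <= b.1 + p - 1))) (map fst (D [::] (nf_arrangement tau))).
  by rewrite sorted_map.
have c_step i : i.+1 < k -> c i.+1 + p <= c i.
  by move=> hi; have := c_gap (ltnSn i) hi; lia.
rewrite nf_letters //; apply: sorted_cat_rel.
- rewrite sorted_map; apply: sorted_iota_succ => i _ hi /=.
  by have := c_step i; lia.
- rewrite map_rev rev_sorted sorted_map; apply: sorted_iota_succ => i _ hi /=.
  by have := c_step i; lia.
- by move=> x y /mapP[j _ ->] /mapP[j' _ ->].
Qed.

Lemma decorated_word_eval_e : eval_is_e p (map fst (D [::] (iota 0 d))).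
Proof.
apply: Fp_trans (Fp_eq_steps (@Fp_eq_rw1_pair p) steps_rw1_sign_sorted) _.
apply: Fp_trans (Fp_eq_steps (fun x1 x2 y1 y2 => @Fp_eq_rw2_pair p x1 x2 y1 y2 p_gt0)
  steps_rw2_nf_arrangement) _.
by rewrite nf_letters; exact: Fp_eq_mirror.
Qed.

Lemma decorated_word_tau : tau_is p (map fst (D [::] (iota 0 d))) tau.
Proof.
exists (D [::] (nf_arrangement tau)); split; last first.
  by move=> l; rewrite map_snd_decorate; exact: index_nf_arrangement.
exists (D [::] sign_sorted); split.
- have -> : tag_word (map fst (D [::] (iota 0 d))) = D [::] (iota 0 d).
    rewrite /tag_word size_map size_decorate size_iota.
    by rewrite -[in X in zip _ X](map_snd_decorate p sg rk c [::] (iota 0 d)) zip_unzip.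
  exact: steps_rw1_sign_sorted.
- exact: irreducible_rw1_sign_sorted.
- exact: steps_rw2_nf_arrangement.
- exact: irreducible_rw2_nf_arrangement.
Qed.

End NormalFormWord.

Section SubsetWords.
Variables (k : nat) (tau : 'S_(k + k)) (p n' M : nat).
Local Notation d := (k + k).
Local Notation n := n'.+1.
Local Notation sg := (nf_sign tau).
Local Notation rk := (nf_rank tau).
Local Notation W := ((p - 1) * d).
Local Notation G := (2 * ((p - 1) * d) + p).
Hypothesis p_gt0 : 0 < p.
Hypothesis budget : W + (k - 1) * G + M + W <= n.

Definition sorted_elems (S : {set 'I_M}) := sort leq (map val (enum S)).

(* Normal-form indices c_0 > ... > c_(k-1): the blocks of width [G] are laid out
   from the top down, and within its block c_j is offset by an element of [S]. *)
Definition gap_index (S : {set 'I_M}) j := W + (k - 1 - j) * G + nth 0 (sorted_elems S) (k - 1 - j).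

Definition subset_letter_index (S : {set 'I_M}) i := shifted_index p sg rk (gap_index S) i (iota 0 i).

Definition subset_word (S : {set 'I_M}) : d.-tuple ('I_n * bool) :=
  [tuple (inord (subset_letter_index S i), sg i) | i < d].

Lemma size_sorted_elems (S : {set 'I_M}) : #|S| = k -> size (sorted_elems S) = k.
Proof. by move=> h; rewrite /sorted_elems size_sort size_map -cardE. Qed.

Lemma sorted_elems_ltn (S : {set 'I_M}) i j : #|S| = k -> i < j -> j < k ->
  nth 0 (sorted_elems S) i < nth 0 (sorted_elems S) j.
Proof.
move=> h hij hj.
have hs : sorted ltn (sorted_elems S).
  rewrite ltn_sorted_uniq_leq sort_uniq (map_inj_uniq val_inj) enum_uniq /=.
  exact: (sort_sorted leq_total).
by apply: (sorted_ltn_nth ltn_trans 0 hs) => //; rewrite inE size_sorted_elems //; lia.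
Qed.

Lemma sorted_elems_lt (S : {set 'I_M}) i : #|S| = k -> i < k -> nth 0 (sorted_elems S) i < M.
Proof.
move=> h hi; have : nth 0 (sorted_elems S) i \in sorted_elems S.
  by rewrite mem_nth // size_sorted_elems.
by rewrite mem_sort => /mapP[x _ ->]; exact: ltn_ord.
Qed.

Lemma gap_index_ge (S : {set 'I_M}) j : W <= gap_index S j.
Proof. by rewrite /gap_index -addnA leq_addr. Qed.

Lemma gap_index_gap (S : {set 'I_M}) i j : #|S| = k -> i < j -> j < k ->
  gap_index S j + 2 * W + p <= gap_index S i.
Proof.
move=> h hij hj; rewrite /gap_index.
have h1 := sorted_elems_ltn h (_ : k - 1 - j < k - 1 - i) (_ : k - 1 - i < k).
have h2 : (k - 1 - j).+1 * G <= (k - 1 - i) * G by rewrite leq_mul2r; apply/orP; right; lia.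
rewrite mulSn in h2.
move: h2 h1; move: ((k - 1 - j) * G) ((k - 1 - i) * G) => a b h2 h1.
by have := h1 ltac:(lia) ltac:(lia); move: h2; move: ((p - 1) * d) => u; lia.
Qed.

Lemma subset_letter_index_lt (S : {set 'I_M}) i : #|S| = k -> i < d -> subset_letter_index S i < n.
Proof.
move=> h hi; have hL : size (iota 0 i) < d by rewrite size_iota.
have hrk := nf_rank_lt tau hi.
have [_ ub] := shifted_index_bounds sg p_gt0 (@nf_rank_lt k tau) (fun j _ => gap_index_ge S j) hL hi.
have hG : (k - 1 - rk i) * G <= (k - 1) * G by rewrite leq_mul2r; apply/orP; right; lia.
have hM : nth 0 (sorted_elems S) (k - 1 - rk i) < M by apply: sorted_elems_lt; lia.
move: ub hG hM budget; rewrite /subset_letter_index /gap_index.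
by move: ((k - 1 - rk i) * G) ((k - 1) * G) ((p - 1) * d) => a b u; lia.
Qed.

Lemma word_of_subset_word (S : {set 'I_M}) : #|S| = k ->
  word_of (subset_word S) = map fst (decorate p sg rk (gap_index S) [::] (iota 0 d)).
Proof.
move=> h.
have -> : map fst (decorate p sg rk (gap_index S) [::] (iota 0 d)) =
          map (fun i => (subset_letter_index S i, sg i)) (iota 0 d).
  rewrite decorateE size_iota -map_comp; apply/eq_in_map => i.
  rewrite mem_iota => /andP[_ hi] /=.
  rewrite nth_iota // take_iota minnC (minn_idPr _); last exact: ltnW.
  have hr : perm_eq (rev (iota 0 i)) (iota 0 i) by rewrite perm_rev.
  by rewrite cats0 /subset_letter_index (shifted_index_perm _ _ _ _ _ hr).
apply: (@eq_from_nth _ (0, false)); first by rewrite /word_of size_map size_tuple size_map size_iota.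
move=> i; rewrite /word_of size_map size_tuple => hi.
rewrite (nth_map (ord0, false)) ?size_tuple // (nth_map 0) ?size_iota // nth_iota //.
rewrite -[i]/(nat_of_ord (Ordinal hi)) nth_mktuple /= inordK //.
exact: subset_letter_index_lt.
Qed.

Lemma subset_word_in_W0 (S : {set 'I_M}) : #|S| = k ->
  eval_is_e p (word_of (subset_word S)) /\ tau_is p (word_of (subset_word S)) tau.
Proof.
move=> h; rewrite word_of_subset_word //.
have c_ge j : j < k -> W <= gap_index S j by move=> _; exact: gap_index_ge.
have c_gap i j := @gap_index_gap S i j h.
split; [exact (decorated_word_eval_e tau p_gt0 c_ge c_gap) | exact (decorated_word_tau tau p_gt0 c_ge c_gap)].
Qed.

Lemma gap_index_eq (S1 S2 : {set 'I_M}) j : j < k ->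
  subset_letter_index S1 (letter_at tau j) = subset_letter_index S2 (letter_at tau j) ->
  gap_index S1 j = gap_index S2 j.
Proof.
move=> hj; have hi : letter_at tau j < d by apply: letter_at_lt; lia.
have hL : size (iota 0 (letter_at tau j)) < d by rewrite size_iota.
have := count_scaled_lt p (fun f => ~~ sg f && (rk (letter_at tau j) < rk f)) hL.
have := gap_index_ge S1 j; have := gap_index_ge S2 j.
rewrite /subset_letter_index /shifted_index /nneg_above nf_rank_letter_at ?ifT //; last by lia.
by move: ((p - 1) * count _ _) ((p - 1) * count _ _) ((p - 1) * d) => a b u; lia.
Qed.

Lemma subset_word_inj : {in [set S : {set 'I_M} | #|S| == k] &, injective subset_word}.
Proof.
move=> S1 S2; rewrite !inE => /eqP h1 /eqP h2 e.
have gap_eq j : j < k -> gap_index S1 j = gap_index S2 j.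
  move=> hj; apply: gap_index_eq => //.
  have hi : letter_at tau j < d by apply: letter_at_lt; lia.
  have := congr1 (fun w => tnth w (Ordinal hi)) e.
  rewrite !tnth_mktuple => [[]] /(congr1 (@nat_of_ord _)).
  by rewrite !inordK //; apply: subset_letter_index_lt.
have elems_eq : sorted_elems S1 = sorted_elems S2.
  apply: (@eq_from_nth _ 0); first by rewrite !size_sorted_elems.
  move=> i; rewrite size_sorted_elems // => hi.
  have := gap_eq (k - 1 - i) ltac:(lia); rewrite /gap_index (_ : k - 1 - (k - 1 - i) = i) //; last by lia.
  by move: (i * G) => a; lia.
apply/setP => x; have mem (S : {set 'I_M}) : (x \in S) = (val x \in sorted_elems S).
  by rewrite /sorted_elems mem_sort (mem_map val_inj) mem_enum.
by rewrite !mem elems_eq.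
Qed.

Lemma binomial_le_Ncount : 'C(M, k) <= Ncount p n tau.
Proof.
rewrite /Ncount -[M]card_ord -card_draws -(card_in_imset subset_word_inj).
apply: subset_leq_card; apply/subsetP => w /imsetP[S]; rewrite inE => /eqP h ->.
by rewrite inE; apply/asboolP; exact: subset_word_in_W0.
Qed.

End SubsetWords.

Lemma index_budget k q n : 0 < k -> 0 < q ->
  (k + k) * (q.+1 - 1) + (k + k) * (4 * q.+1 - 4) + (2 * (k * k)) * (4 * q.+1 - 4) + k < n ->
  (q.+1 - 1) * (k + k) + (k - 1) * (2 * ((q.+1 - 1) * (k + k)) + q.+1) +
   (n - (k + k) * (q.+1 - 1) - (k + k) * (4 * q.+1 - 4) - (2 * (k * k)) * (4 * q.+1 - 4))
   + (q.+1 - 1) * (k + k) <= n.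
Proof.
move=> hk hq hn.
have e0 : q.+1 - 1 = q by lia.
have e4 : 4 * q.+1 - 4 = 4 * q by lia.
rewrite e0 e4 in hn *.
have h1 : (k - 1) * (2 * (q * (k + k)) + q.+1) <= k * (2 * (q * (k + k)) + q.+1).
  by apply: leq_mul => //; lia.
have e5 : k * (2 * (q * (k + k)) + q.+1) = 4 * (k * k * q) + k * q + k by ring.
have e1 : q * (k + k) = 2 * (k * q) by ring.
have e2 : (k + k) * q = 2 * (k * q) by ring.
have e3 : (k + k) * (4 * q) = 8 * (k * q) by ring.
have e6 : 2 * (k * k) * (4 * q) = 8 * (k * k * q) by ring.
have kq : k <= k * q by rewrite leq_pmulr.
rewrite e5 in h1; rewrite e1 in h1 *; rewrite e2 e3 e6 in hn *.
move: h1 hn kq; move: ((k - 1) * (2 * (2 * (k * q)) + q.+1)) (k * q) (k * k * q) => a b c.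
lia.
Qed.

Unset Implicit Arguments.

Theorem mainTheorem9 (p : nat) (hp : 2 <= p) (d : nat) (hd0 : 0 < d)
  (hdeven : ~~ odd d) (tau : 'S_d) (n : nat)
  (hn : d * (p - 1) + d * (4 * p - 4) + (d ^ 2 %/ 2) * (4 * p - 4) + d %/ 2 < n) :
  'C(n - d * (p - 1) - d * (4 * p - 4) - (d ^ 2 %/ 2) * (4 * p - 4), d %/ 2)
    <= Ncount p n tau.
Proof.
have [k dk] : exists k, d = k + k.
  by exists d./2; rewrite addnn -[LHS]odd_double_half (negbTE hdeven).
have e1 : d %/ 2 = k by rewrite dk; lia.
have e2 : d ^ 2 %/ 2 = 2 * (k * k).
  by rewrite dk (_ : (k + k) ^ 2 = 2 * (k * k) * 2) ?mulnK //; ring.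
rewrite e1 e2 in hn *; subst d.
case: n hn => [|n'] hn; first by rewrite ltn0 in hn.
case: p hp hn => [|q] hp hn //.
apply: binomial_le_Ncount => //.
by apply: index_budget => //; lia.
Qed.
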